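(* If $\Gamma$ is a graph of order $n$ and minimum degree $\delta>0$, then $\gamma_0^o(\Gamma)\le\frac{n}{2}$.
   Context: Graphs are finite and simple. For $S\subseteq V$ and $v\in V$, $\delta_S(v)$ is the number of neighbours of $v$ in $S$, $\overline{S}=V\setminus S$, and $\partial(S)$ the set of vertices of $\overline{S}$ with a neighbour in $S$. A nonempty $S$ is an offensive $0$-alliance if $\delta_S(v)\ge\delta_{\overline{S}}(v)$ for all $v\in\partial(S)$, and a global offensive $0$-alliance if moreover it is dominating. $\gamma_0^o(\Gamma)$ denotes the minimum cardinality of a global offensive $0$-alliance in $\Gamma$. *)

From mathcomp Require Import all_boot.
Set Implicit Arguments. Unset Strict Implicit. Unset Printing Implicit Defensive.

Definition simple_graph (T : finType) (e : rel T) : Prop :=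
  symmetric e /\ irreflexive e.

Definition nbhd (T : finType) (e : rel T) (v : T) : {set T} := [set u | e v u].

Definition deltaS (T : finType) (e : rel T) (S : {set T}) (v : T) : nat :=
  #|nbhd e v :&: S|.

Definition boundary (T : finType) (e : rel T) (S : {set T}) : {set T} :=
  [set v in ~: S | [exists u in S, e v u]].

Definition offensive0 (T : finType) (e : rel T) (S : {set T}) : bool :=
  (S != set0) &&
  [forall v in boundary e S, deltaS e (~: S) v <= deltaS e S v].

Definition dominating (T : finType) (e : rel T) (S : {set T}) : bool :=
  [forall v in ~: S, [exists u in S, e v u]].

Definition global_offensive0 (T : finType) (e : rel T) (S : {set T}) : bool :=
  offensive0 e S && dominating e S.

(* gamma_0^o: minimum cardinality of a global offensive 0-alliance
   (the default #|T| is only reached when none exists, i.e. T empty). *)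
Definition gamma0o (T : finType) (e : rel T) : nat :=
  \big[minn/#|T|]_(S : {set T} | global_offensive0 e S) #|S|.

Definition min_degree (T : finType) (e : rel T) : nat :=
  \big[minn/#|T|]_(v : T) #|nbhd e v|.

From mathcomp Require Import all_boot all_order zify.
Set Implicit Arguments.
Unset Strict Implicit.
Unset Printing Implicit Defensive.
Import Order.TTheory.

(* Take a bipartition (S, ~: S) of the vertices minimising the number of
   monochromatic edges (a maximum cut).  Moving a single vertex v to the other
   side cannot decrease that number, so v has at least as many neighbours on
   the opposite side as on its own.  When the minimum degree is positive this
   makes both S and ~: S global offensive 0-alliances, and the smaller of the
   two has at most n/2 vertices. *)

Section MaxCut.
Variables (T : finType) (e : rel T).

Definition monochromatic (S : {set T}) x y := e x y && ((x \in S) == (y \in S)).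
Definition bichromatic (S : {set T}) x y := e x y && ((x \in S) != (y \in S)).

(* Ordered pairs, so every monochromatic edge is counted twice. *)
Definition monochromatic_count (S : {set T}) : nat :=
  \sum_x \sum_y (monochromatic S x y : nat).

Definition flip (S : {set T}) (v : T) : {set T} := [set x | (x \in S) != (x == v)].

Lemma monochromatic_setC (S : {set T}) x y :
  monochromatic (~: S) x y = monochromatic S x y.
Proof. by rewrite /monochromatic !inE; case: (x \in S); case: (y \in S). Qed.

Lemma monochromatic_count_setC (S : {set T}) :
  monochromatic_count (~: S) = monochromatic_count S.
Proof.
by apply: eq_bigr => x _; apply: eq_bigr => y _; rewrite monochromatic_setC.
Qed.

Lemma deltaS_sum (A : {set T}) v : deltaS e A v = \sum_y (e v y && (y \in A) : nat).
Proof.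
rewrite /deltaS -sum1_card big_mkcond /=; apply: eq_bigr => y _.
by rewrite !inE; case: (e v y); case: (y \in A).
Qed.

Lemma sum_monochromatic_notin (S : {set T}) v : v \notin S ->
  \sum_y (monochromatic S v y : nat) = deltaS e (~: S) v.
Proof.
move=> vS; rewrite deltaS_sum; apply: eq_bigr => y _.
by rewrite /monochromatic !inE (negbTE vS); case: (y \in S).
Qed.

Lemma sum_bichromatic_notin (S : {set T}) v : v \notin S ->
  \sum_y (bichromatic S v y : nat) = deltaS e S v.
Proof.
move=> vS; rewrite deltaS_sum; apply: eq_bigr => y _.
by rewrite /bichromatic (negbTE vS); case: (y \in S).
Qed.

Lemma sum_eq_indicator (F : T -> nat) v : \sum_x (x == v) * F x = F v.
Proof.
rewrite (bigD1 v) //= eqxx mul1n big1 ?addn0 // => x /negbTE ->.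
by rewrite mul0n.
Qed.

Hypothesis e_simple : simple_graph e.

(* Flipping v changes the colour class of exactly the pairs with an endpoint v;
   the counting is stated without subtraction. *)
Lemma monochromatic_flip (S : {set T}) v x y :
  (monochromatic (flip S v) x y : nat)
    + (x == v) * monochromatic S x y + (y == v) * monochromatic S x y =
  (monochromatic S x y : nat)
    + (x == v) * bichromatic S x y + (y == v) * bichromatic S x y.
Proof.
case: e_simple => _ e_irr; rewrite /monochromatic /bichromatic !inE.
case: (eqVneq x v) => [->|xv]; case: (eqVneq y v) => [->|yv] /=.
- by rewrite e_irr.
- by case: (v \in S) (y \in S) (e v y) => [] [] [].
- by case: (v \in S) (x \in S) (e x v) => [] [] [].
- by rewrite !mul0n !addn0; case: (x \in S); case: (y \in S).
Qed.

Lemma monochromatic_count_flip (S : {set T}) v :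
  monochromatic_count (flip S v) + 2 * \sum_y (monochromatic S v y : nat)
  = monochromatic_count S + 2 * \sum_y (bichromatic S v y : nat).
Proof.
case: e_simple => e_sym _.
have sum_first (F : T -> T -> nat) : \sum_x \sum_y (x == v) * F x y = \sum_y F v y.
  rewrite -(sum_eq_indicator (fun x => \sum_y F x y)).
  by apply: eq_bigr => x _; rewrite big_distrr.
have sum_second (F : T -> T -> nat) : \sum_x \sum_y (y == v) * F x y = \sum_x F x v.
  by apply: eq_bigr => x _; rewrite sum_eq_indicator.
have sum_flip :
    \sum_x \sum_y ((monochromatic (flip S v) x y : nat)
      + (x == v) * monochromatic S x y + (y == v) * monochromatic S x y) =
    \sum_x \sum_y ((monochromatic S x y : nat)
      + (x == v) * bichromatic S x y + (y == v) * bichromatic S x y).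
  by apply: eq_bigr => x _; apply: eq_bigr => y _; apply: monochromatic_flip.
have sum2D (F G : T -> T -> nat) :
    \sum_x \sum_y (F x y + G x y) = \sum_x \sum_y F x y + \sum_x \sum_y G x y.
  by rewrite -big_split; apply: eq_bigr => x _; rewrite -big_split.
rewrite !sum2D !sum_first !sum_second in sum_flip.
have sum_at_v (c : T -> T -> bool) : (forall x y, c x y = c y x) ->
    \sum_x (c x v : nat) = \sum_y (c v y : nat).
  by move=> c_sym; apply: eq_bigr => x _; rewrite c_sym.
rewrite !(sum_at_v (monochromatic S)) ?(sum_at_v (bichromatic S)) in sum_flip;
  try by move=> x y; rewrite /monochromatic /bichromatic e_sym eq_sym.
rewrite /monochromatic_count; lia.
Qed.

Lemma min_monochromatic_majority (S : {set T}) :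
  (forall S', monochromatic_count S <= monochromatic_count S') ->
  forall v, v \notin S -> deltaS e (~: S) v <= deltaS e S v.
Proof.
move=> S_min v vS; have := monochromatic_count_flip S v.
rewrite sum_monochromatic_notin // sum_bichromatic_notin //.
by have := S_min (flip S v); lia.
Qed.

End MaxCut.

Section Alliance.
Variables (T : finType) (e : rel T).

Lemma min_degree_le v : min_degree e <= #|nbhd e v|.
Proof.
rewrite /min_degree -minEnat.
exact: (bigmin_le_cond _ (fun u => #|nbhd e u|) (isT : predT v)).
Qed.

Lemma gamma0o_le (A : {set T}) : global_offensive0 e A -> gamma0o e <= #|A|.
Proof.
move=> A_all; rewrite /gamma0o -minEnat.
exact: (bigmin_le_cond _ (fun S : {set T} => #|S|) A_all).
Qed.

Lemma deltaS_setC (A : {set T}) v : deltaS e A v + deltaS e (~: A) v = #|nbhd e v|.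
Proof. by rewrite /deltaS -setDE cardsID. Qed.

Lemma nbhd_meets (A : {set T}) v : 0 < deltaS e A v -> exists2 u, u \in A & e v u.
Proof.
by rewrite /deltaS card_gt0 => /set0Pn [u]; rewrite !inE => /andP [evu uA]; exists u.
Qed.

(* Positive minimum degree turns the majority condition into domination. *)
Lemma global_offensive0_majority (A : {set T}) :
  0 < #|T| -> 0 < min_degree e ->
  (forall v, v \notin A -> deltaS e (~: A) v <= deltaS e A v) ->
  global_offensive0 e A.
Proof.
move=> T_gt0 delta_gt0 majority.
have A_nbr v : v \notin A -> exists2 u, u \in A & e v u.
  move=> vA; apply: nbhd_meets.
  by have := majority v vA; have := deltaS_setC A v; have := min_degree_le v; lia.
apply/andP; split; [apply/andP; split |].
- apply/set0Pn; have [v _] := card_gt0P T_gt0.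
  by case: (boolP (v \in A)) => [|/A_nbr [u]]; [exists v | exists u].
- by apply/forall_inP => v; rewrite inE => /andP [/[!inE] /majority].
- by apply/forall_inP => v /[!inE] /A_nbr [u uA evu]; apply/exists_inP; exists u.
Qed.

End Alliance.

Theorem mainTheorem7 (T : finType) (e : rel T) :
  simple_graph e -> 0 < #|T| -> 0 < min_degree e ->
  (gamma0o e).*2 <= #|T|.
Proof.
move=> e_simple T_gt0 delta_gt0.
have [S _ S_min] := arg_minnP (monochromatic_count e) (isT : predT set0).
have {}S_min S' : monochromatic_count e S <= monochromatic_count e S'.
  exact: S_min.
have Sc_min S' : monochromatic_count e (~: S) <= monochromatic_count e S'.
  by rewrite monochromatic_count_setC.
have S_all : global_offensive0 e S.
  exact: global_offensive0_majority (min_monochromatic_majority e_simple S_min).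
have Sc_all : global_offensive0 e (~: S).
  exact: global_offensive0_majority (min_monochromatic_majority e_simple Sc_min).
have := gamma0o_le S_all; have := gamma0o_le Sc_all; have := cardsC S; lia.
Qed.
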